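(* $(U_0,\alpha_N)$ is a corecursive algebra for $N\otimes-$ on $\mathsf{SquaMS}$, and $(U_0,\alpha_N^{-1})$ is a final coalgebra for this same functor.
   Context: Let $M_0=\{(r,s)\in[0,1]^2: r\in\{0,1\}\text{ or } s\in\{0,1\}\}$. A square metric space is a pair $(X,S_X)$ with $X$ a metric space with all distances at most $2$ and $S_X\colon M_0\to X$ injective such that (sq1) for $i\in\{0,1\}$, $r,s\in[0,1]$: $d_X(S_X(i,r),S_X(i,s))=|s-r|$ and $d_X(S_X(r,i),S_X(s,i))=|s-r|$; (sq2) $d_X(S_X(r,s),S_X(t,u))\ge|r-t|+|s-u|$. $\mathsf{SquaMS}$: these objects, with short maps $f$ satisfying $f\circ S_X=S_Y$ as morphisms. Let $N=\{0,1,2\}^2$, also viewed as points of $\mathbb{R}^2$. For $X$ in $\mathsf{SquaMS}$, $N\otimes X=(N\times X)/\!\sim$, where $\sim$ is generated by $(m,S_X(p))\sim(n,S_X(q))$ whenever $m,n\in N$ differ by exactly $1$ in exactly one coordinate and $(m+p)/3=(n+q)/3$; $n\otimes x$ is the class of $(n,x)$. With $d((a,u),(b,v))=\frac13 d_X(u,v)$ if $a=b$ and $2$ otherwise, $N\otimes X$ gets the quotient metric (infimum over finite chains of sums of consecutive distances, $\sim$-related consecutive pairs counting $0$). $S_{N\otimes X}(p)=n\otimes S_X(3p-n)$ for any $n\in N$ with $p\in(n+[0,1]^2)/3$; $(N\otimes f)(n\otimes x)=n\otimes f(x)$. $U_0=[0,1]^2$ with the taxicab metric $d((x,y),(x',y'))=|x-x'|+|y-y'|$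 and $S_{U_0}$ the inclusion of $M_0$. $\alpha_N\colon N\otimes U_0\to U_0$, $\alpha_N(n\otimes z)=\frac13(n+z)$ (an isomorphism). An algebra $(A,a\colon FA\to A)$ is corecursive if for every coalgebra $e\colon X\to FX$ there is a unique morphism $e^\dagger\colon X\to A$ with $e^\dagger=a\circ Fe^\dagger\circ e$. A final coalgebra admits a unique coalgebra morphism from every coalgebra. *)

From Stdlib Require Import Reals Lra Relations ProofIrrelevance.
From Coquelicot Require Import Rbar Lub.
Open Scope R_scope.

Record MetricSpace := {
  ms_car :> Type;
  ms_dist : ms_car -> ms_car -> R;
  ms_dist_refl : forall x, ms_dist x x = 0;
  ms_dist_eq0 : forall x y, ms_dist x y = 0 -> x = y;
  ms_dist_sym : forall x y, ms_dist x y = ms_dist y x;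
  ms_dist_tri : forall x y z, ms_dist x z <= ms_dist x y + ms_dist y z }.
Arguments ms_dist {m} _ _.

Definition in01 (x : R) : Prop := 0 <= x <= 1.
Definition is01 (x : R) : Prop := x = 0 \/ x = 1.

Definition inM0 (p : R * R) : Prop :=
  in01 (fst p) /\ in01 (snd p) /\ (is01 (fst p) \/ is01 (snd p)).

(* ---------- Square metric spaces ----------
   S_X : M_0 -> X is represented by a total function R*R -> X of which only
   the values on M_0 are ever used. *)
Record SquaMS := {
  sq_ms :> MetricSpace;
  sq_S : R * R -> sq_ms;
  sq_bound : forall x y : sq_ms, ms_dist x y <= 2;
  sq_inj : forall p q, inM0 p -> inM0 q -> sq_S p = sq_S q -> p = q;
  sq_1a : forall i r s, is01 i -> in01 r -> in01 s ->
            ms_dist (sq_S (i, r)) (sq_S (i, s)) = Rabs (s - r);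
  sq_1b : forall i r s, is01 i -> in01 r -> in01 s ->
            ms_dist (sq_S (r, i)) (sq_S (s, i)) = Rabs (s - r);
  sq_2 : forall r s t u, inM0 (r, s) -> inM0 (t, u) ->
            ms_dist (sq_S (r, s)) (sq_S (t, u)) >= Rabs (r - t) + Rabs (s - u) }.
Arguments sq_S {s} _ : rename.

Definition is_short {X Y : MetricSpace} (f : X -> Y) : Prop :=
  forall x y, ms_dist (f x) (f y) <= ms_dist x y.
Definition is_mor {X Y : SquaMS} (f : X -> Y) : Prop :=
  is_short f /\ forall p, inM0 p -> f (sq_S p) = sq_S p.

Inductive D3 := d0 | d1 | d2.
Definition d3R (a : D3) : R := match a with d0 => 0 | d1 => 1 | d2 => 2 end.
Definition N3 : Type := (D3 * D3)%type.
Lemma D3_eq_dec (a b : D3) : {a = b} + {a <> b}.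
Proof. decide equality. Qed.
Lemma N_eq_dec (a b : N3) : {a = b} + {a <> b}.
Proof. decide equality; apply D3_eq_dec. Qed.

Definition adjacent (m n : N3) : Prop :=
  (Rabs (d3R (fst m) - d3R (fst n)) = 1 /\ snd m = snd n) \/
  (fst m = fst n /\ Rabs (d3R (snd m) - d3R (snd n)) = 1).

Definition shrink (n : N3) (p : R * R) : R * R :=
  ((d3R (fst n) + fst p) / 3, (d3R (snd n) + snd p) / 3).
Definition expand (p : R * R) (n : N3) : R * R :=
  (3 * fst p - d3R (fst n), 3 * snd p - d3R (snd n)).
Definition inTile (n : N3) (p : R * R) : Prop :=
  d3R (fst n) / 3 <= fst p <= (d3R (fst n) + 1) / 3 /\
  d3R (snd n) / 3 <= snd p <= (d3R (snd n) + 1) / 3.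

(* ---------- N (x) X, as a setoid on representatives N3 * X ---------- *)
Section Tensor.
Variable X : SquaMS.

Definition tgen (a b : N3 * X) : Prop :=
  exists m n p q, a = (m, sq_S p) /\ b = (n, sq_S q) /\ inM0 p /\ inM0 q /\
    adjacent m n /\ shrink m p = shrink n q.

Definition tequiv : N3 * X -> N3 * X -> Prop := clos_refl_sym_trans _ tgen.

Definition bdist (a b : N3 * X) : R :=
  if N_eq_dec (fst a) (fst b) then ms_dist (snd a) (snd b) / 3 else 2.

Inductive chain_val : N3 * X -> N3 * X -> R -> Prop :=
| cv_refl a : chain_val a a 0
| cv_step a b c s : chain_val b c s -> chain_val a c (bdist a b + s)
| cv_jump a b c s : tequiv a b -> chain_val b c s -> chain_val a c s.

(* quotient (pseudo)distance between the classes of a and b *)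
Definition qdist (a b : N3 * X) : R := real (Glb_Rbar (chain_val a b)).

(* a coalgebra X -> N (x) X, given by a choice of representatives: a SquaMS
   morphism (short for the quotient metric, and e o S_X = S_{N (x) X}) *)
Definition is_coalg (e : X -> N3 * X) : Prop :=
  (forall x y, qdist (e x) (e y) <= ms_dist x y) /\
  (forall p n, inM0 p -> inTile n p -> tequiv (e (sq_S p)) (n, sq_S (expand p n))).
End Tensor.
Arguments tequiv {X} _ _.
Arguments qdist {X} _ _.

Definition tmap {X Y : SquaMS} (f : X -> Y) (a : N3 * X) : N3 * Y :=
  (fst a, f (snd a)).

Definition U0car : Type := {z : R * R | in01 (fst z) /\ in01 (snd z)}.
Definition taxi (z w : U0car) : R :=
  Rabs (fst (proj1_sig z) - fst (proj1_sig w)) + Rabs (snd (proj1_sig z) - snd (proj1_sig w)).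

Ltac rabs_lra :=
  unfold Rabs in *;
  repeat match goal with
         | |- context [Rcase_abs ?a] => destruct (Rcase_abs a)
         | H : context [Rcase_abs ?a] |- _ => destruct (Rcase_abs a)
         end; lra.

Lemma U0_eq (z w : U0car) : proj1_sig z = proj1_sig w -> z = w.
Proof.
  destruct z as [z hz], w as [w hw]; simpl; intros ->.
  f_equal; apply proof_irrelevance.
Qed.

Definition U0ms : MetricSpace.
Proof.
  refine {| ms_car := U0car; ms_dist := taxi |}.
  - intros [[x y] h]; unfold taxi; simpl; rabs_lra.
  - intros [[x y] h] [[x' y'] h'] H; apply U0_eq; unfold taxi in H; simpl in *.
    f_equal; rabs_lra.
  - intros [[x y] h] [[x' y'] h']; unfold taxi; simpl; rabs_lra.
  - intros [[x y] h] [[x' y'] h'] [[x'' y''] h'']; unfold taxi; simpl; rabs_lra.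
Defined.

Definition clamp01 (x : R) : R := Rmax 0 (Rmin 1 x).
Lemma clamp01_in (x : R) : in01 (clamp01 x).
Proof. unfold clamp01, in01, Rmax, Rmin; repeat destruct Rle_dec; lra. Qed.
Lemma clamp01_id (x : R) : in01 x -> clamp01 x = x.
Proof. unfold clamp01, in01, Rmax, Rmin; intros; repeat destruct Rle_dec; lra. Qed.

(* S_{U_0}: the inclusion of M_0 (clamped to [0,1]^2 outside M_0, irrelevant) *)
Definition SU0 (p : R * R) : U0car :=
  exist _ (clamp01 (fst p), clamp01 (snd p)) (conj (clamp01_in _) (clamp01_in _)).

Lemma in01_is01 x : is01 x -> in01 x.
Proof. unfold is01, in01; lra. Qed.

Definition U0 : SquaMS.
Proof.
  refine {| sq_ms := U0ms; sq_S := SU0 |}.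
  - intros [[x y] [hx hy]] [[x' y'] [hx' hy']]; simpl; unfold taxi, in01 in *; simpl in *; rabs_lra.
  - intros [x y] [x' y'] [hx [hy _]] [hx' [hy' _]] H; simpl in *.
    apply (f_equal (@proj1_sig _ _)) in H; simpl in H.
    rewrite !clamp01_id in H by assumption; exact H.
  - intros i r s hi hr hs; simpl; unfold taxi; simpl.
    rewrite !clamp01_id by (auto using in01_is01); rabs_lra.
  - intros i r s hi hr hs; simpl; unfold taxi; simpl.
    rewrite !clamp01_id by (auto using in01_is01); rabs_lra.
  - intros r s t u [hr [hs _]] [ht [hu _]]; simpl in *; unfold taxi; simpl.
    rewrite !clamp01_id by assumption; lra.
Defined.

Lemma shrink_in (a : D3) (x : R) : in01 x -> in01 ((d3R a + x) / 3).
Proof. unfold in01; destruct a; simpl; lra. Qed.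

Definition alpha (c : N3 * U0) : U0 :=
  let n := fst c in let z := proj1_sig (snd c) in
  let h := proj2_sig (snd c) in
  exist _ ((d3R (fst n) + fst z) / 3, (d3R (snd n) + snd z) / 3)
    (conj (shrink_in _ _ (proj1 h)) (shrink_in _ _ (proj2 h))).

Definition tidx (x : R) : D3 :=
  if Rlt_dec x (1/3) then d0 else if Rlt_dec x (2/3) then d1 else d2.
Lemma tidx_ok (x : R) : in01 x -> in01 (3 * x - d3R (tidx x)).
Proof. unfold tidx, in01; repeat destruct Rlt_dec; simpl; lra. Qed.

Definition alpha_inv (z : U0) : N3 * U0 :=
  let p := proj1_sig z in let h := proj2_sig z in
  ((tidx (fst p), tidx (snd p)),
   exist _ (3 * fst p - d3R (tidx (fst p)), 3 * snd p - d3R (tidx (snd p)))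
     (conj (tidx_ok _ (proj1 h)) (tidx_ok _ (proj2 h))) : U0car).

(* In the coordinates [x + y] and [x - y] the taxicab metric on [U_0] is the
   max metric, so a short map [X -> U_0] restricting to [S_X] is obtained by
   extending both coordinates from [S_X(M_0)] to [X] by McShane's formula
   (condition (sq2) makes them 1-Lipschitz there) and clamping to [[0,1]^2].
   Since [alpha_N] contracts by a factor 3 on each tile, the map
   [h |-> alpha_N o (N (x) h) o e] is a 1/3-contraction for the uniform
   distance that preserves morphisms; iterating it from that map converges to
   its unique fixed point.  [alpha_N] respects [~] because adjacent tiles share
   an edge, and [alpha_N^{-1}] is short because two points of [U_0] are joined
   by a staircase path each of whose pieces stays inside one tile. *)
From Pilot Require Import Defs.
From Stdlib Require Import Reals Lra Lia Relations.
From Stdlib Require Import IndefiniteDescription FunctionalExtensionality.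
From Coquelicot Require Import Rbar Lub.
Open Scope R_scope.

Lemma ms_dist_ge0 (M : MetricSpace) (x y : M) : 0 <= ms_dist x y.
Proof.
  pose proof (ms_dist_tri M x y x) as H.
  rewrite ms_dist_refl, (ms_dist_sym M y x) in H; lra.
Qed.

Lemma Glb_Rbar_le (E : R -> Prop) (L t : R) :
  (forall u, E u -> L <= u) -> E t -> real (Glb_Rbar E) <= t.
Proof.
  intros HL Et; destruct (Glb_Rbar_correct E) as [lb glb]; revert lb glb.
  destruct (Glb_Rbar E) as [g| |]; simpl; intros lb glb.
  - exact (lb t Et).
  - destruct (lb t Et).
  - destruct (glb (Finite L) HL).
Qed.

Lemma le_Glb_Rbar (E : R -> Prop) (L t : R) :
  (forall u, E u -> L <= u) -> E t -> L <= real (Glb_Rbar E).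
Proof.
  intros HL Et; destruct (Glb_Rbar_correct E) as [lb glb]; revert lb glb.
  destruct (Glb_Rbar E) as [g| |]; simpl; intros lb glb.
  - exact (glb (Finite L) HL).
  - destruct (lb t Et).
  - destruct (glb (Finite L) HL).
Qed.

Lemma pow3_pos (k : nat) : 0 < 3 ^ k.
Proof. apply pow_lt; lra. Qed.

Lemma div_pow3_S (c : R) (k : nat) : c / 3 ^ S k = c / 3 ^ k / 3.
Proof. pose proof (pow3_pos k); simpl; field; lra. Qed.

Lemma INR_succ_le_pow3 (k : nat) : INR k + 1 <= 3 ^ k.
Proof.
  induction k as [|k IH]; [simpl; lra|].
  rewrite S_INR; simpl; pose proof (pos_INR k); lra.
Qed.

Lemma exists_div_pow3_lt (c eps : R) : 0 < eps -> exists k, c / 3 ^ k < eps.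
Proof.
  intros Heps; destruct (Rle_lt_dec c 0) as [Hc|Hc].
  { exists 0%nat; simpl; lra. }
  destruct (archimed_cor1 (eps / c)) as [k [Hk Hk0]].
  { apply Rdiv_lt_0_compat; lra. }
  exists k; pose proof (INR_succ_le_pow3 k); pose proof (pow3_pos k).
  assert (0 < INR k) by (apply lt_0_INR; exact Hk0).
  apply Rle_lt_trans with (c / INR k).
  - unfold Rdiv; apply Rmult_le_compat_l; [lra|]; apply Rinv_le_contravar; lra.
  - apply (Rmult_lt_compat_l c) in Hk; [|lra].
    replace (c * (eps / c)) with eps in Hk by (field; lra); unfold Rdiv; lra.
Qed.

Lemma le0_of_le_div_pow3 (a c : R) : (forall k, a <= c / 3 ^ k) -> a <= 0.
Proof.
  intros H; destruct (Rle_lt_dec a 0) as [Ha|Ha]; [exact Ha|].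
  destruct (exists_div_pow3_lt c a Ha) as [k Hk]; specialize (H k); lra.
Qed.

Lemma geometric_cauchy_limit (u : nat -> R) (c : R) :
  (forall k j, Rabs (u (k + j)%nat - u k) <= c / 3 ^ k) ->
  exists l, forall k, Rabs (l - u k) <= c / 3 ^ k.
Proof.
  intros Hu.
  assert (Hc : Cauchy_crit u).
  { intros eps Heps; destruct (exists_div_pow3_lt (2 * c) eps Heps) as [N HN].
    exists N; intros n m Hn Hm; unfold Rdist.
    pose proof (Hu N (n - N)%nat) as A; pose proof (Hu N (m - N)%nat) as B.
    replace (N + (n - N))%nat with n in A by lia.
    replace (N + (m - N))%nat with m in B by lia.
    assert (2 * c / 3 ^ N = c / 3 ^ N + c / 3 ^ N) by (unfold Rdiv; ring).
    rabs_lra. }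
  destruct (R_complete u Hc) as [l Hl]; exists l; intros k.
  destruct (Rle_lt_dec (Rabs (l - u k)) (c / 3 ^ k)) as [H|H]; [exact H|].
  destruct (Hl (Rabs (l - u k) - c / 3 ^ k)) as [N HN]; [lra|].
  specialize (HN (k + N)%nat ltac:(lia)); unfold Rdist in HN.
  pose proof (Hu k N); rabs_lra.
Qed.

Lemma in01_geometric_limit (u : nat -> R) (c l : R) :
  (forall k, in01 (u k)) -> (forall k, Rabs (l - u k) <= c / 3 ^ k) -> in01 l.
Proof.
  intros Hu Hl; unfold in01 in *.
  assert (- l <= 0 /\ l - 1 <= 0); [|lra].
  split; apply (le0_of_le_div_pow3 _ c); intros k;
    specialize (Hl k); specialize (Hu k); rabs_lra.
Qed.

Lemma taxi_ge0 (z w : U0) : 0 <= taxi z w.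
Proof. exact (ms_dist_ge0 U0ms z w). Qed.

Lemma taxi_le2 (z w : U0) : taxi z w <= 2.
Proof. exact (sq_bound U0 z w). Qed.

Lemma taxi_sym (z w : U0) : taxi z w = taxi w z.
Proof. exact (ms_dist_sym U0ms z w). Qed.

Lemma taxi_tri (z w u : U0) : taxi z u <= taxi z w + taxi w u.
Proof. exact (ms_dist_tri U0ms z w u). Qed.

Lemma taxi_le0_eq (z w : U0) : taxi z w <= 0 -> z = w.
Proof. intros H; apply (ms_dist_eq0 U0ms); pose proof (taxi_ge0 z w); simpl; lra. Qed.

Lemma eq_of_taxi_le_div_pow3 (z w : U0) (c : R) :
  (forall k, taxi z w <= c / 3 ^ k) -> z = w.
Proof. intros H; apply taxi_le0_eq, (le0_of_le_div_pow3 _ c), H. Qed.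

Lemma eq_of_geometric_approx (z w : U0) (u : nat -> U0) (c : R) :
  (forall k, taxi z (u k) <= c / 3 ^ k) -> (forall k, taxi w (u k) <= c / 3 ^ k) -> z = w.
Proof.
  intros Hz Hw; apply (eq_of_taxi_le_div_pow3 _ _ (2 * c)); intros k.
  pose proof (taxi_tri z (u k) w); rewrite (taxi_sym (u k)) in *.
  pose proof (Hz k); pose proof (Hw k).
  assert (2 * c / 3 ^ k = c / 3 ^ k + c / 3 ^ k) by (unfold Rdiv; ring); lra.
Qed.

Lemma taxi_alpha (n : N3) (u v : U0) :
  taxi (alpha (n, u)) (alpha (n, v)) = taxi u v / 3.
Proof. destruct u as [[a b] h], v as [[c d] h']; unfold taxi, alpha; simpl; rabs_lra. Qed.

Lemma inM0_in01 (p : R * R) : inM0 p -> in01 (fst p) /\ in01 (snd p).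
Proof. intros [h1 [h2 _]]; auto. Qed.

Lemma proj1_sig_SU0 (z : R * R) :
  in01 (fst z) -> in01 (snd z) -> proj1_sig (SU0 z) = z.
Proof. destruct z; simpl; intros; rewrite !clamp01_id by assumption; reflexivity. Qed.

Lemma SU0_proj1_sig (z : U0) : SU0 (proj1_sig z) = z.
Proof. apply U0_eq; destruct z as [z [h1 h2]]; apply proj1_sig_SU0; assumption. Qed.

Lemma alpha_SU0 (m : N3) (q : R * R) :
  in01 (fst q) -> in01 (snd q) -> alpha (m, SU0 q) = SU0 (shrink m q).
Proof.
  intros h1 h2; apply U0_eq; rewrite proj1_sig_SU0 by (apply shrink_in; auto).
  unfold alpha, shrink; simpl; rewrite !clamp01_id by assumption; reflexivity.
Qed.

Lemma clamp01_lip (a b : R) : Rabs (clamp01 a - clamp01 b) <= Rabs (a - b).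
Proof. unfold clamp01, Rmax, Rmin; repeat destruct Rle_dec; rabs_lra. Qed.

Lemma taxi_SU0 (a b : R * R) :
  taxi (SU0 a) (SU0 b) <= Rabs (fst a - fst b) + Rabs (snd a - snd b).
Proof.
  unfold taxi; simpl.
  pose proof (clamp01_lip (fst a) (fst b)); pose proof (clamp01_lip (snd a) (snd b)); lra.
Qed.

Section QuotientMetric.
Variable X : SquaMS.

Lemma bdist_ge0 (a b : N3 * X) : 0 <= bdist X a b.
Proof.
  unfold bdist; destruct N_eq_dec; [|lra].
  pose proof (ms_dist_ge0 _ (snd a) (snd b)); lra.
Qed.

Lemma chain_val_ge0 (a b : N3 * X) (s : R) : chain_val X a b s -> 0 <= s.
Proof. induction 1 as [|a b c s _ IH|]; [lra| |exact IHchain_val]; pose proof (bdist_ge0 a b); lra. Qed.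

Lemma chain_val_app (a b c : N3 * X) (s t : R) :
  chain_val X a b s -> chain_val X b c t -> chain_val X a c (s + t).
Proof.
  intros H; revert c t; induction H as [|a b c s _ IH|a b c s Hab _ IH]; intros d t Ht.
  - rewrite Rplus_0_l; exact Ht.
  - rewrite Rplus_assoc; apply cv_step, IH, Ht.
  - eapply cv_jump; [exact Hab|]; apply IH, Ht.
Qed.

Lemma qdist_le_chain (a b : N3 * X) (s : R) : chain_val X a b s -> qdist a b <= s.
Proof. intros H; apply (Glb_Rbar_le _ 0); [apply chain_val_ge0|exact H]. Qed.

Lemma le_qdist (a b : N3 * X) (L : R) :
  (forall s, chain_val X a b s -> L <= s) -> L <= qdist a b.
Proof. intros H; apply (le_Glb_Rbar _ L (bdist X a b + 0)); [exact H|apply cv_step, cv_refl]. Qed.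
End QuotientMetric.

Section Functoriality.
Variables (X Y : SquaMS) (f : X -> Y).
Hypothesis f_mor : is_mor f.

Lemma tmap_tequiv (a b : N3 * X) : tequiv a b -> tequiv (tmap f a) (tmap f b).
Proof.
  induction 1 as [a b Hg|a|a b _ IH|a b c _ IH1 _ IH2].
  - destruct Hg as (m & n & p & q & -> & -> & Hp & Hq & Hadj & Hs).
    apply rst_step; exists m, n, p, q; unfold tmap; simpl.
    rewrite (proj2 f_mor p Hp), (proj2 f_mor q Hq).
    exact (conj eq_refl (conj eq_refl (conj Hp (conj Hq (conj Hadj Hs))))).
  - apply rst_refl.
  - apply rst_sym, IH.
  - eapply rst_trans; [exact IH1|exact IH2].
Qed.

Lemma bdist_tmap (a b : N3 * X) : bdist Y (tmap f a) (tmap f b) <= bdist X a b.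
Proof.
  unfold bdist, tmap; simpl; destruct N_eq_dec; [|lra].
  pose proof (proj1 f_mor (snd a) (snd b)); lra.
Qed.

Lemma chain_val_tmap (a b : N3 * X) (s : R) : chain_val X a b s ->
  exists t, chain_val Y (tmap f a) (tmap f b) t /\ t <= s.
Proof.
  induction 1 as [a|a b c s _ [t [Ht Hts]]|a b c s Hab _ [t [Ht Hts]]].
  - exists 0; split; [apply cv_refl|lra].
  - exists (bdist Y (tmap f a) (tmap f b) + t); split; [apply cv_step, Ht|].
    pose proof (bdist_tmap a b); lra.
  - exists t; split; [eapply cv_jump; [apply tmap_tequiv, Hab|exact Ht]|exact Hts].
Qed.

Lemma qdist_tmap (a b : N3 * X) : qdist (tmap f a) (tmap f b) <= qdist a b.
Proof.
  apply le_qdist; intros s Hs; destruct (chain_val_tmap a b s Hs) as [t [Ht Hts]].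
  pose proof (qdist_le_chain Y _ _ t Ht); lra.
Qed.
End Functoriality.

Lemma alpha_tequiv (a b : N3 * U0) : tequiv a b -> alpha a = alpha b.
Proof.
  induction 1 as [a b Hg|a|a b _ IH|a b c _ IH1 _ IH2]; [|reflexivity|auto|congruence].
  destruct Hg as (m & n & p & q & -> & -> & Hp & Hq & _ & Hs).
  destruct (inM0_in01 p Hp), (inM0_in01 q Hq); simpl.
  rewrite !alpha_SU0 by assumption; congruence.
Qed.

Lemma alpha_chain_val (a b : N3 * U0) (s : R) :
  chain_val U0 a b s -> taxi (alpha a) (alpha b) <= s.
Proof.
  induction 1 as [a|a b c s _ IH|a b c s Hab _ IH].
  - pose proof (ms_dist_refl U0ms (alpha a)) as H; simpl in H; lra.
  - eapply Rle_trans; [apply (taxi_tri _ (alpha b))|]; apply Rplus_le_compat; [|exact IH].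
    destruct a as [n u], b as [m v]; unfold bdist; simpl.
    destruct (N_eq_dec n m) as [<-|_]; [rewrite taxi_alpha; simpl; lra|apply taxi_le2].
  - rewrite (alpha_tequiv a b Hab); exact IH.
Qed.

Lemma alpha_short (a b : N3 * U0) : taxi (alpha a) (alpha b) <= qdist a b.
Proof. apply le_qdist; intros s; apply alpha_chain_val. Qed.

Lemma shrink_expand (n : N3) (z : R * R) : shrink n (expand z n) = z.
Proof. destruct z; unfold shrink, expand; simpl; f_equal; field. Qed.

Lemma alpha_expand (p : R * R) (n : N3) :
  inTile n p -> alpha (n, SU0 (expand p n)) = SU0 p.
Proof.
  intros [[h1 h2] [h3 h4]]; simpl; rewrite alpha_SU0, shrink_expand; [reflexivity| |];
    unfold in01; simpl; destruct (fst n), (snd n); simpl in *; lra.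
Qed.

Lemma alpha_alpha_inv (z : U0) : alpha (alpha_inv z) = z.
Proof. apply U0_eq; destruct z as [[x y] h]; unfold alpha, alpha_inv; simpl; f_equal; field. Qed.

Definition in_third (a : D3) (x : R) : Prop := d3R a / 3 <= x <= (d3R a + 1) / 3.

Lemma in_third_tidx (x : R) : in01 x -> in_third (tidx x) x.
Proof. unfold tidx, in_third, in01; intros; repeat destruct Rlt_dec; simpl; lra. Qed.

Lemma tidx_is01 (x : R) : is01 x -> is01 (3 * x - d3R (tidx x)).
Proof.
  unfold is01, tidx; intros [-> | ->]; repeat destruct Rlt_dec; simpl;
    first [left; lra | right; lra].
Qed.

Lemma in01_in_third (a : D3) (x : R) : in_third a x -> in01 x.
Proof. unfold in_third, in01; destruct a; simpl; lra. Qed.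

Lemma in01_expand_in_third (a : D3) (x : R) : in_third a x -> in01 (3 * x - d3R a).
Proof. unfold in_third, in01; destruct a; simpl; lra. Qed.

Lemma in_third_shared (a b : D3) (x : R) : in_third a x -> in_third b x -> a <> b ->
  is01 (3 * x - d3R a) /\ Rabs (d3R a - d3R b) = 1.
Proof.
  intros h1 h2 ne; destruct a, b; try congruence; unfold in_third, is01 in *; simpl in *;
    (split; [first [left; lra | right; lra] | rabs_lra]).
Qed.

Lemma in01_expand (n : N3) (z : R * R) :
  inTile n z -> in01 (fst (expand z n)) /\ in01 (snd (expand z n)).
Proof. intros [h1 h2]; split; apply in01_expand_in_third; assumption. Qed.

Lemma inTile_tidx (z : R * R) :
  in01 (fst z) -> in01 (snd z) -> inTile (tidx (fst z), tidx (snd z)) z.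
Proof. intros; split; apply in_third_tidx; assumption. Qed.

Lemma adjacent_sym (m n : N3) : adjacent m n -> adjacent n m.
Proof.
  unfold adjacent; rewrite (Rabs_minus_sym (d3R (fst m))), (Rabs_minus_sym (d3R (snd m))).
  intros [[h1 h2]|[h1 h2]]; [left|right]; split; auto.
Qed.

Lemma inM0_expand_adjacent (n m : N3) (z : R * R) :
  inTile n z -> inTile m z -> adjacent n m -> inM0 (expand z n).
Proof.
  intros hn hm hadj; destruct (in01_expand n z hn) as [e1 e2].
  destruct hn as [hn1 hn2], hm as [hm1 hm2].
  refine (conj e1 (conj e2 _)).
  destruct hadj as [[h _]|[_ h]]; [left|right].
  - assert (ne : fst n <> fst m) by (intros E; rewrite E, Rminus_diag, Rabs_R0 in h; lra).
    exact (proj1 (in_third_shared _ _ _ hn1 hm1 ne)).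
  - assert (ne : snd n <> snd m) by (intros E; rewrite E, Rminus_diag, Rabs_R0 in h; lra).
    exact (proj1 (in_third_shared _ _ _ hn2 hm2 ne)).
Qed.

Lemma tgen_adjacent_tiles (n m : N3) (z : R * R) :
  inTile n z -> inTile m z -> adjacent n m ->
  tgen U0 (n, SU0 (expand z n)) (m, SU0 (expand z m)).
Proof.
  intros hn hm hadj; exists n, m, (expand z n), (expand z m).
  refine (conj eq_refl (conj eq_refl (conj _ (conj _ (conj hadj _))))).
  - exact (inM0_expand_adjacent n m z hn hm hadj).
  - exact (inM0_expand_adjacent m n z hm hn (adjacent_sym _ _ hadj)).
  - rewrite !shrink_expand; reflexivity.
Qed.

Lemma tequiv_tiles (n m : N3) (z : R * R) : inTile n z -> inTile m z ->
  @tequiv U0 (n, SU0 (expand z n)) (m, SU0 (expand z m)).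
Proof.
  destruct n as [n1 n2], m as [m1 m2]; intros hn hm.
  destruct hn as [hn1 hn2], hm as [hm1 hm2]; simpl in *.
  assert (hk : inTile (m1, n2) z) by (split; assumption).
  destruct (D3_eq_dec n1 m1) as [<-|e1], (D3_eq_dec n2 m2) as [<-|e2].
  - apply rst_refl.
  - apply rst_step, tgen_adjacent_tiles; try split; auto; right; split; [reflexivity|].
    exact (proj2 (in_third_shared _ _ _ hn2 hm2 e2)).
  - apply rst_step, tgen_adjacent_tiles; try split; auto; left; split; [|reflexivity].
    exact (proj2 (in_third_shared _ _ _ hn1 hm1 e1)).
  - apply rst_trans with ((m1, n2), SU0 (expand z (m1, n2))).
    + apply rst_step, tgen_adjacent_tiles; try split; auto; left; split; [|reflexivity].
      exact (proj2 (in_third_shared _ _ _ hn1 hm1 e1)).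
    + apply rst_step, tgen_adjacent_tiles; try split; auto; right; split; [reflexivity|].
      exact (proj2 (in_third_shared _ _ _ hn2 hm2 e2)).
Qed.

Lemma alpha_inv_tequiv (z : U0) (n : N3) : inTile n (proj1_sig z) ->
  @tequiv U0 (alpha_inv z) (n, SU0 (expand (proj1_sig z) n)).
Proof.
  destruct z as [z [h1 h2]]; simpl; intros hn.
  replace (alpha_inv _) with ((tidx (fst z), tidx (snd z)),
                              SU0 (expand z (tidx (fst z), tidx (snd z)))).
  - apply tequiv_tiles; [apply inTile_tidx|]; assumption.
  - unfold alpha_inv; f_equal; apply U0_eq; simpl.
    rewrite !clamp01_id by (apply tidx_ok; assumption); reflexivity.
Qed.

Lemma alpha_inv_alpha (c : N3 * U0) : tequiv (alpha_inv (alpha c)) c.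
Proof.
  destruct c as [n [[x y] [h1 h2]]].
  assert (hn : inTile n (proj1_sig (alpha (n, exist _ (x, y) (conj h1 h2))))).
  { unfold inTile, alpha, in01 in *; simpl in *; destruct (fst n), (snd n); simpl; lra. }
  eapply rst_trans; [exact (alpha_inv_tequiv _ n hn)|].
  replace (SU0 _) with (exist _ (x, y) (conj h1 h2) : U0); [apply rst_refl|].
  apply U0_eq; unfold expand, alpha; simpl.
  replace (3 * ((d3R (fst n) + x) / 3) - d3R (fst n)) with x by field.
  replace (3 * ((d3R (snd n) + y) / 3) - d3R (snd n)) with y by field.
  rewrite !clamp01_id by assumption; reflexivity.
Qed.

Lemma alpha_inv_tequiv_iff (z : U0) (c : N3 * U0) : tequiv (alpha_inv z) c <-> z = alpha c.
Proof.
  split.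
  - intros H; rewrite <- (alpha_alpha_inv z); apply alpha_tequiv, H.
  - intros ->; apply alpha_inv_alpha.
Qed.

Definition same_third (u v : R) : Prop := exists a, in_third a u /\ in_third a v.

Lemma same_third_sym (u v : R) : same_third u v -> same_third v u.
Proof. intros [a [h1 h2]]; exists a; auto. Qed.

Lemma same_third_intro (u v : R) : in01 u -> in01 v -> u <= v ->
  (v <= 1/3 \/ 1/3 <= u) -> (v <= 2/3 \/ 2/3 <= u) -> same_third u v.
Proof.
  unfold in01; intros h1 h2 h3 [h4|h4] [h5|h5];
    first [exists Defs.d0; unfold in_third; simpl; repeat split; lra
          |exists Defs.d1; unfold in_third; simpl; repeat split; lra
          |exists Defs.d2; unfold in_third; simpl; repeat split; lra].
Qed.

(* Break [x, y] at 1/3 and 2/3 so that each piece lies in a single third. *)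
Lemma staircase_le (x y : R) : in01 x -> in01 y -> x <= y -> exists a b,
  in01 a /\ in01 b /\ Rabs (x - y) = Rabs (x - a) + Rabs (a - b) + Rabs (b - y) /\
  same_third x a /\ same_third a b /\ same_third b y.
Proof.
  intros hx hy hxy; exists (Rmax x (Rmin y (1/3))), (Rmax x (Rmin y (2/3))).
  unfold in01 in *; unfold Rmax, Rmin; repeat destruct Rle_dec;
    refine (conj _ (conj _ (conj _ (conj _ (conj _ _))))); try lra; try rabs_lra;
    apply same_third_intro; unfold in01; try lra; first [left; lra | right; lra].
Qed.

Lemma staircase (x y : R) : in01 x -> in01 y -> exists a b,
  in01 a /\ in01 b /\ Rabs (x - y) = Rabs (x - a) + Rabs (a - b) + Rabs (b - y) /\
  same_third x a /\ same_third a b /\ same_third b y.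
Proof.
  intros hx hy; destruct (Rle_lt_dec x y) as [h|h]; [apply staircase_le; auto|].
  destruct (staircase_le y x) as (a & b & ha & hb & E & n1 & n2 & n3); auto; [lra|].
  exists b, a; refine (conj hb (conj ha (conj _ _))).
  - rewrite (Rabs_minus_sym x y), E, (Rabs_minus_sym y a), (Rabs_minus_sym a b),
      (Rabs_minus_sym b x); lra.
  - refine (conj _ (conj _ _)); apply same_third_sym; assumption.
Qed.

Definition chain_within (a b : N3 * U0) (r : R) : Prop :=
  exists s, chain_val U0 a b s /\ s <= r.

Lemma chain_within_app (a b c : N3 * U0) (r r' : R) :
  chain_within a b r -> chain_within b c r' -> chain_within a c (r + r').
Proof.
  intros [s [h1 h2]] [t [h3 h4]]; exists (s + t).
  split; [apply chain_val_app with b; assumption|lra].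
Qed.

Lemma chain_within_weaken (a b : N3 * U0) (r r' : R) :
  chain_within a b r -> r <= r' -> chain_within a b r'.
Proof. intros [s [h1 h2]] h; exists s; split; [exact h1|lra]. Qed.

Lemma chain_within_tile (n : N3) (z w : R * R) : inTile n z -> inTile n w ->
  chain_within (alpha_inv (SU0 z)) (alpha_inv (SU0 w))
    (Rabs (fst z - fst w) + Rabs (snd z - snd w)).
Proof.
  intros hz hw.
  assert (vz : proj1_sig (SU0 z) = z)
    by (destruct hz; apply proj1_sig_SU0; eapply in01_in_third; eassumption).
  assert (vw : proj1_sig (SU0 w) = w)
    by (destruct hw; apply proj1_sig_SU0; eapply in01_in_third; eassumption).
  pose proof (alpha_inv_tequiv (SU0 z) n) as Ez; rewrite vz in Ez.
  pose proof (alpha_inv_tequiv (SU0 w) n) as Ew; rewrite vw in Ew.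
  exists (bdist U0 (n, SU0 (expand z n)) (n, SU0 (expand w n)) + 0); split.
  - eapply cv_jump; [exact (Ez hz)|]; apply cv_step.
    eapply cv_jump; [apply rst_sym, (Ew hw)|]; apply cv_refl.
  - unfold bdist; simpl; destruct N_eq_dec as [_|c]; [|congruence].
    destruct (in01_expand n z hz), (in01_expand n w hw).
    unfold taxi; rewrite !proj1_sig_SU0 by assumption; simpl; rabs_lra.
Qed.

Lemma chain_within_horizontal (u v c : R) : in01 c -> same_third u v ->
  chain_within (alpha_inv (SU0 (u, c))) (alpha_inv (SU0 (v, c))) (Rabs (u - v)).
Proof.
  intros hc [a [h1 h2]].
  eapply chain_within_weaken; [apply (chain_within_tile (a, tidx c))|];
    try (split; [assumption|apply in_third_tidx, hc]).
  simpl; rewrite Rminus_diag, Rabs_R0; lra.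
Qed.

Lemma chain_within_vertical (u v c : R) : in01 c -> same_third u v ->
  chain_within (alpha_inv (SU0 (c, u))) (alpha_inv (SU0 (c, v))) (Rabs (u - v)).
Proof.
  intros hc [a [h1 h2]].
  eapply chain_within_weaken; [apply (chain_within_tile (tidx c, a))|];
    try (split; [apply in_third_tidx, hc|assumption]).
  simpl; rewrite Rminus_diag, Rabs_R0; lra.
Qed.

Lemma alpha_inv_short (z w : U0) : qdist (alpha_inv z) (alpha_inv w) <= taxi z w.
Proof.
  rewrite <- (SU0_proj1_sig z), <- (SU0_proj1_sig w) at 1.
  destruct z as [[z1 z2] [h1 h2]], w as [[w1 w2] [h3 h4]]; unfold taxi; simpl in *.
  destruct (staircase z1 w1 h1 h3) as (a & b & ha & hb & E1 & n1 & n2 & n3).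
  destruct (staircase z2 w2 h2 h4) as (c & d & hc & hd & E2 & m1 & m2 & m3).
  assert (H : chain_within (alpha_inv (SU0 (z1, z2))) (alpha_inv (SU0 (w1, w2)))
                (Rabs (z1 - w1) + Rabs (z2 - w2))).
  { rewrite E1, E2; repeat rewrite <- Rplus_assoc.
    eapply chain_within_app; [|apply (chain_within_vertical d w2 w1); assumption].
    eapply chain_within_app; [|apply (chain_within_vertical c d w1); assumption].
    eapply chain_within_app; [|apply (chain_within_vertical z2 c w1); assumption].
    eapply chain_within_app; [|apply (chain_within_horizontal b w1 z2); assumption].
    eapply chain_within_app; [|apply (chain_within_horizontal a b z2); assumption].
    apply (chain_within_horizontal z1 a z2); assumption. }
  destruct H as [s [Hs Hsr]]; pose proof (qdist_le_chain U0 _ _ s Hs); lra.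
Qed.

Lemma alpha_inv_coalg : is_coalg U0 alpha_inv.
Proof.
  split; [exact alpha_inv_short|].
  intros p n hp hn; destruct (inM0_in01 p hp) as [h1 h2].
  pose proof (alpha_inv_tequiv (SU0 p) n) as H.
  rewrite proj1_sig_SU0 in H by assumption; exact (H hn).
Qed.

Section McShaneExtension.
Variables (M : MetricSpace) (T : Type) (A : T -> Prop) (s : T -> M) (v : T -> R).
Variables (t0 : T) (L : R).
Hypothesis A_t0 : A t0.
Hypothesis v_lb : forall t, A t -> L <= v t.
Hypothesis v_lip : forall t u, A t -> A u -> v t - v u <= ms_dist (s t) (s u).

Definition mcshane_candidates (x : M) (r : R) : Prop :=
  exists t, A t /\ r = v t + ms_dist x (s t).

Definition mcshane (x : M) : R := real (Glb_Rbar (mcshane_candidates x)).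

Lemma mcshane_candidates_lb (x : M) (r : R) : mcshane_candidates x r -> L <= r.
Proof. intros [t [ht ->]]; pose proof (v_lb t ht); pose proof (ms_dist_ge0 _ x (s t)); lra. Qed.

Lemma mcshane_le (x : M) (t : T) : A t -> mcshane x <= v t + ms_dist x (s t).
Proof. intros ht; apply (Glb_Rbar_le _ L); [apply mcshane_candidates_lb|exists t; auto]. Qed.

Lemma mcshane_lip (x y : M) : mcshane x <= mcshane y + ms_dist x y.
Proof.
  assert (mcshane x - ms_dist x y <= mcshane y); [|lra].
  apply (le_Glb_Rbar _ _ (v t0 + ms_dist y (s t0))); [|exists t0; auto].
  intros r [t [ht ->]]; pose proof (mcshane_le x t ht).
  pose proof (ms_dist_tri _ x y (s t)); lra.
Qed.

Lemma mcshane_extends (t : T) : A t -> mcshane (s t) = v t.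
Proof.
  intros ht; apply Rle_antisym.
  - pose proof (mcshane_le (s t) t ht); rewrite ms_dist_refl in *; lra.
  - apply (le_Glb_Rbar _ _ (v t + ms_dist (s t) (s t))); [|exists t; auto].
    intros r [u [hu ->]]; pose proof (v_lip t u ht hu); lra.
Qed.
End McShaneExtension.
Arguments mcshane {M T} A s v x.

Lemma inM0_00 : inM0 (0, 0).
Proof. unfold inM0, in01, is01; simpl; split; [lra|split; [lra|left; left; reflexivity]]. Qed.

Section InitialMorphism.
Variable X : SquaMS.

Lemma sq_S_lip (phi : R * R -> R) :
  (forall p q, phi p - phi q <= Rabs (fst p - fst q) + Rabs (snd p - snd q)) ->
  forall p q, inM0 p -> inM0 q -> phi p - phi q <= ms_dist (sq_S p) (sq_S q :> X).
Proof.
  intros Hphi [p1 p2] [q1 q2] hp hq; pose proof (sq_2 X p1 p2 q1 q2 hp hq).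
  pose proof (Hphi (p1, p2) (q1, q2)); simpl in *; lra.
Qed.

Definition diag_plus (p : R * R) : R := fst p + snd p.
Definition diag_minus (p : R * R) : R := fst p - snd p.

Lemma diag_plus_ge (p : R * R) : inM0 p -> -1 <= diag_plus p.
Proof. intros [h1 [h2 _]]; unfold diag_plus, in01 in *; lra. Qed.

Lemma diag_minus_ge (p : R * R) : inM0 p -> -1 <= diag_minus p.
Proof. intros [h1 [h2 _]]; unfold diag_minus, in01 in *; lra. Qed.

Lemma diag_plus_extends (p : R * R) :
  inM0 p -> mcshane inM0 (@sq_S X) diag_plus (sq_S p) = diag_plus p.
Proof.
  apply (mcshane_extends _ _ _ _ _ (-1)); [exact diag_plus_ge|].
  apply sq_S_lip; intros; unfold diag_plus; rabs_lra.
Qed.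

Lemma diag_minus_extends (p : R * R) :
  inM0 p -> mcshane inM0 (@sq_S X) diag_minus (sq_S p) = diag_minus p.
Proof.
  apply (mcshane_extends _ _ _ _ _ (-1)); [exact diag_minus_ge|].
  apply sq_S_lip; intros; unfold diag_minus; rabs_lra.
Qed.

Definition seed_mor (x : X) : U0 :=
  let u := mcshane inM0 (@sq_S X) diag_plus x in
  let w := mcshane inM0 (@sq_S X) diag_minus x in
  SU0 ((u + w) / 2, (u - w) / 2).

Lemma seed_mor_is_mor : is_mor seed_mor.
Proof.
  split.
  - intros x y; simpl; eapply Rle_trans; [apply taxi_SU0|]; simpl.
    pose proof (mcshane_lip X _ inM0 (@sq_S X) diag_plus (0, 0) (-1) inM0_00 diag_plus_ge) as Hu.
    pose proof (mcshane_lip X _ inM0 (@sq_S X) diag_minus (0, 0) (-1) inM0_00 diag_minus_ge) as Hw.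
    pose proof (Hu x y); pose proof (Hu y x); pose proof (Hw x y); pose proof (Hw y x).
    rewrite (ms_dist_sym _ y x) in *; rabs_lra.
  - intros p hp; unfold seed_mor; rewrite diag_plus_extends, diag_minus_extends by exact hp.
    destruct p as [p1 p2]; unfold diag_plus, diag_minus; simpl; f_equal; f_equal; field.
Qed.
End InitialMorphism.

Section Corecursion.
Variables (X : SquaMS) (e : X -> N3 * X).
Hypothesis e_coalg : is_coalg X e.

Definition lies_over (p : R * R) (b : N3 * X) : Prop :=
  exists m q, b = (m, sq_S q) /\ inM0 q /\ shrink m q = p.

Lemma lies_over_tequiv (p : R * R) (a b : N3 * X) :
  tequiv a b -> lies_over p a <-> lies_over p b.
Proof.
  induction 1 as [a b Hg|a|a b _ IH|a b c _ IH1 _ IH2]; [|tauto|tauto|tauto].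
  destruct Hg as (m1 & n1 & p1 & q1 & -> & -> & Hp & Hq & _ & Hs).
  split; intros (m & q & E & hq & <-); injection E as <- E;
    apply (sq_inj X) in E; auto; subst q.
  - exists n1, q1; auto.
  - exists m1, p1; auto.
Qed.

Lemma coalg_lies_over (p : R * R) : inM0 p -> lies_over p (e (sq_S p)).
Proof.
  intros hp; destruct (inM0_in01 p hp) as [h1 h2].
  set (n := (tidx (fst p), tidx (snd p))).
  assert (hn : inTile n p) by (apply inTile_tidx; assumption).
  apply (lies_over_tequiv p _ _ (rst_sym _ _ _ _ (proj2 e_coalg p n hp hn))).
  exists n, (expand p n); split; [reflexivity|split; [|apply shrink_expand]].
  destruct (in01_expand n p hn) as [e1 e2]; refine (conj e1 (conj e2 _)).
  destruct hp as [_ [_ [hi|hi]]]; [left|right]; apply tidx_is01, hi.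
Qed.

Definition corec_step (h : X -> U0) (x : X) : U0 := alpha (tmap h (e x)).

Lemma corec_step_is_mor (h : X -> U0) : is_mor h -> is_mor (corec_step h).
Proof.
  intros hmor; split.
  - intros x y; unfold corec_step.
    pose proof (alpha_short (tmap h (e x)) (tmap h (e y))).
    pose proof (qdist_tmap X U0 h hmor (e x) (e y)).
    pose proof (proj1 e_coalg x y); simpl; lra.
  - intros p hp; destruct (coalg_lies_over p hp) as (m & q & E & hq & <-).
    unfold corec_step, tmap; rewrite E; simpl; rewrite (proj2 hmor q hq).
    destruct (inM0_in01 q hq); apply alpha_SU0; assumption.
Qed.

Lemma corec_step_contraction (h h' : X -> U0) (c : R) :
  (forall x, taxi (h x) (h' x) <= c) ->
  forall x, taxi (corec_step h x) (corec_step h' x) <= c / 3.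
Proof.
  intros H x; unfold corec_step, tmap; rewrite taxi_alpha.
  unfold Rdiv; apply Rmult_le_compat_r; [lra|apply H].
Qed.

Lemma iter_corec_step_close (k : nat) (h h' : X -> U0) (x : X) :
  taxi (Nat.iter k corec_step h x) (Nat.iter k corec_step h' x) <= 2 / 3 ^ k.
Proof.
  revert x; induction k as [|k IH].
  - intros x; simpl; pose proof (taxi_le2 (h x) (h' x)); lra.
  - rewrite div_pow3_S; apply corec_step_contraction, IH.
Qed.

Lemma corec_step_fixpoint_unique (h h' : X -> U0) :
  (forall x, h x = corec_step h x) -> (forall x, h' x = corec_step h' x) -> h = h'.
Proof.
  intros H H'.
  assert (iter_fix : forall g, (forall x, g x = corec_step g x) ->
            forall k, Nat.iter k corec_step g = g).
  { intros g Hg k; induction k as [|k IH]; [reflexivity|].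
    rewrite Nat.iter_succ, IH; symmetry; apply functional_extensionality, Hg. }
  apply functional_extensionality; intros x; apply (eq_of_taxi_le_div_pow3 _ _ 2); intros k.
  pose proof (iter_corec_step_close k h h' x) as Hk.
  rewrite (iter_fix h H k), (iter_fix h' H' k) in Hk; exact Hk.
Qed.

Definition corec_approx (k : nat) : X -> U0 := Nat.iter k corec_step (seed_mor X).

Lemma corec_approx_is_mor (k : nat) : is_mor (corec_approx k).
Proof.
  induction k as [|k IH]; [apply seed_mor_is_mor|].
  apply corec_step_is_mor, IH.
Qed.

Lemma corec_approx_limit (x : X) :
  exists z : U0, forall k, taxi z (corec_approx k x) <= 4 / 3 ^ k.
Proof.
  set (u1 k := fst (proj1_sig (corec_approx k x))).
  set (u2 k := snd (proj1_sig (corec_approx k x))).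
  assert (cauchy : forall k j, taxi (corec_approx (k + j) x) (corec_approx k x) <= 2 / 3 ^ k).
  { intros k j; unfold corec_approx; rewrite Nat.iter_add; apply iter_corec_step_close. }
  destruct (geometric_cauchy_limit u1 2) as [l1 L1].
  { intros k j; pose proof (cauchy k j) as H; unfold taxi in H; unfold u1.
    pose proof (Rabs_pos (u2 (k + j)%nat - u2 k)); unfold u2 in *; lra. }
  destruct (geometric_cauchy_limit u2 2) as [l2 L2].
  { intros k j; pose proof (cauchy k j) as H; unfold taxi in H; unfold u2.
    pose proof (Rabs_pos (u1 (k + j)%nat - u1 k)); unfold u1 in *; lra. }
  assert (h1 : in01 l1)
    by (apply (in01_geometric_limit u1 2); [intros k; apply (proj2_sig (corec_approx k x))|exact L1]).
  assert (h2 : in01 l2)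
    by (apply (in01_geometric_limit u2 2); [intros k; apply (proj2_sig (corec_approx k x))|exact L2]).
  exists (exist _ (l1, l2) (conj h1 h2)); intros k; unfold taxi; simpl.
  specialize (L1 k); specialize (L2 k); unfold u1, u2 in *.
  assert (4 / 3 ^ k = 2 / 3 ^ k + 2 / 3 ^ k) by (unfold Rdiv; ring); lra.
Qed.

Definition corec (x : X) : U0 :=
  proj1_sig (constructive_indefinite_description _ (corec_approx_limit x)).

Lemma corec_approx_conv (x : X) (k : nat) : taxi (corec x) (corec_approx k x) <= 4 / 3 ^ k.
Proof. unfold corec; destruct constructive_indefinite_description as [z Hz]; apply Hz. Qed.

Lemma corec_fixpoint (x : X) : corec x = corec_step corec x.
Proof.
  apply (eq_of_geometric_approx _ _ (fun k => corec_approx k x) 4); [apply corec_approx_conv|].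
  intros [|k].
  - simpl; pose proof (taxi_le2 (corec_step corec x) (seed_mor X x)); lra.
  - rewrite div_pow3_S; revert x; apply corec_step_contraction.
    intros x; apply corec_approx_conv.
Qed.

Lemma corec_is_mor : is_mor corec.
Proof.
  split.
  - intros x y; simpl; assert (taxi (corec x) (corec y) - ms_dist x y <= 0); [|lra].
    apply (le0_of_le_div_pow3 _ 8); intros k.
    pose proof (taxi_tri (corec x) (corec_approx k x) (corec y)).
    pose proof (taxi_tri (corec_approx k x) (corec_approx k y) (corec y)).
    pose proof (proj1 (corec_approx_is_mor k) x y); simpl in *.
    pose proof (corec_approx_conv x k); pose proof (corec_approx_conv y k).
    rewrite (taxi_sym (corec_approx k y)) in *.
    assert (8 / 3 ^ k = 4 / 3 ^ k + 4 / 3 ^ k) by (unfold Rdiv; ring); lra.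
  - intros p hp; apply (eq_of_taxi_le_div_pow3 _ _ 4); intros k.
    pose proof (corec_approx_conv (sq_S p) k) as Hk.
    rewrite (proj2 (corec_approx_is_mor k) p hp) in Hk; exact Hk.
Qed.
End Corecursion.

Theorem mainTheorem6 :
  (* alpha_N : N (x) U_0 -> U_0 is a SquaMS morphism (well defined on classes,
     short, compatible with S), with inverse alpha_inv *)
  ((forall a b : N3 * U0, tequiv a b -> alpha a = alpha b) /\
   (forall a b : N3 * U0, ms_dist (alpha a) (alpha b) <= qdist a b) /\
   (forall p n, inM0 p -> inTile n p -> alpha (n, sq_S (expand p n)) = sq_S p) /\
   (forall z : U0, alpha (alpha_inv z) = z) /\
   (forall c : N3 * U0, tequiv (alpha_inv (alpha c)) c) /\
   is_coalg U0 alpha_inv) /\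
  (* (U_0, alpha_N) is corecursive *)
  (forall (X : SquaMS) (e : X -> N3 * X), is_coalg X e ->
     exists! h : X -> U0, is_mor h /\ forall x, h x = alpha (tmap h (e x))) /\
  (* (U_0, alpha_N^{-1}) is a final coalgebra *)
  (forall (X : SquaMS) (e : X -> N3 * X), is_coalg X e ->
     exists! h : X -> U0, is_mor h /\
       forall x, tequiv (alpha_inv (h x)) (tmap h (e x))).
Proof.
  split; [|split].
  - refine (conj alpha_tequiv (conj alpha_short (conj _ (conj alpha_alpha_inv
             (conj alpha_inv_alpha alpha_inv_coalg))))).
    intros p n _; apply alpha_expand.
  - intros X e He; exists (corec X e); split.
    + exact (conj (corec_is_mor X e He) (corec_fixpoint X e)).
    + intros h [_ Hh]; exact (corec_step_fixpoint_unique X e _ _ (corec_fixpoint X e) Hh).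
  - intros X e He; exists (corec X e); split.
    + split; [exact (corec_is_mor X e He)|intros x; apply alpha_inv_tequiv_iff, corec_fixpoint].
    + intros h [_ Hh]; apply (corec_step_fixpoint_unique X e _ _ (corec_fixpoint X e)).
      intros x; apply alpha_inv_tequiv_iff, Hh.
Qed.
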